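(* Let $b\ge2$, $n\ge1$ be integers and $\mathcal D=\{d,\dots,d+b-1\}$ a set of consecutive integers containing $0$. For $i,j\in\Omega_n(b,\mathcal D)$, the transition probability $p_{i,j}=\Pr(C_{t+1}=j\mid C_t=i)$ of the $n$-carry process over $(b,\mathcal D)$ equals $$p_{i,j}=\frac{1}{b^n}\sum_{k=0}^{\,j-\left\lfloor \frac{d(n-1)+i}{b}\right\rfloor}(-1)^k\binom{n+1}{k}\binom{n+b(j+1-k)-d(n-1)-i-1}{n},$$ (an empty sum being $0$; all upper entries of the binomial coefficients in the range of summation are nonnegative integers, and $\binom{N}{n}=0$ for $0\le N<n$).
   Context: Carries process over $(b,\mathcal D)$: let $\{X_{k,i}\}_{1\le k\le n,\ i\ge 0}$ be independent random variables, each uniformly distributed on $\mathcal D$. Set $C_0=0$; for $i\ge 0$ let $A_i$ be the unique element of $\mathcal D$ with $A_i\equiv C_i+X_{1,i}+\dots+X_{n,i}\pmod b$, and set $C_{i+1}=(C_i+X_{1,i}+\dots+X_{n,i}-A_i)/b$. The state space $\Omega_n(b,\mathcal D)$ is the set of integers $c$ with $\Pr(C_i=c)>0$ for some $i\ge0$. *)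

From HB Require Import structures.
From mathcomp Require Import all_boot all_order all_algebra.
Set Implicit Arguments. Unset Strict Implicit. Unset Printing Implicit Defensive.
Import Order.TTheory GRing.Theory Num.Theory.
Local Open Scope ring_scope.

(* Digit set D = {d, ..., d+b-1}; a uniform digit of D is encoded as
   d + k with k uniform in 'I_b (a bijection 'I_b -> D). *)

(* One step of the carries process: given the carry c and the digit sum
   s = X_{1,i}+...+X_{n,i}, A is the unique element of D congruent to c+s
   mod b, namely d + ((c+s-d) mod b), and the new carry is (c+s-A)/b. *)
Definition carry_step (b : nat) (d : int) (c s : int) : int :=
  let A := d + ((c + s - d) %% (b%:Z))%Z in
  ((c + s - A) %/ (b%:Z))%Z.

(* Sample space for the first T rounds: all digit arrays
   omega : 'I_T -> 'I_n -> 'I_b (uniform, hence independent uniform digits).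
   digitX omega i k = X_{k,i} as an element of D (for i < T). *)
Definition digitX (b n T : nat) (d : int)
    (omega : {ffun 'I_T -> {ffun 'I_n -> 'I_b}}) (i : nat) (k : 'I_n) : int :=
  match (insub i : option 'I_T) with
  | Some i' => d + ((omega i' k : nat)%:Z)
  | None => 0
  end.

Fixpoint carry_at (b n T : nat) (d : int)
    (omega : {ffun 'I_T -> {ffun 'I_n -> 'I_b}}) (t : nat) : int :=
  match t with
  | 0 => 0
  | t'.+1 => carry_step b d (carry_at d omega t') (\sum_(k < n) digitX d omega t' k)
  end.

Definition prob_C (b n : nat) (d : int) (t : nat) (c : int) : rat :=
  (#|[pred omega : {ffun 'I_t -> {ffun 'I_n -> 'I_b}} | carry_at d omega t == c]|)%:R
  / ((b ^ (n * t))%N)%:R.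

Definition in_Omega (b n : nat) (d : int) (c : int) : Prop :=
  exists t : nat, 0 < prob_C b n d t c.

Definition trans_prob (b n : nat) (d : int) (t : nat) (i j : int) : rat :=
  (#|[pred omega : {ffun 'I_t.+1 -> {ffun 'I_n -> 'I_b}} |
        (carry_at d omega t == i) && (carry_at d omega t.+1 == j)]|)%:R
  / (#|[pred omega : {ffun 'I_t.+1 -> {ffun 'I_n -> 'I_b}} |
        carry_at d omega t == i]|)%:R.

Definition binz (N : int) (m : nat) : nat :=
  if (0 <= N) then 'C(`|N|%N, m) else 0%N.

Definition trans_formula (b n : nat) (d : int) (i j : int) : rat :=
  let M : int := j - ((d * (n%:Z - 1) + i) %/ (b%:Z))%Z in
  (((b ^ n)%N)%:R)^-1 *
  (if 0 <= M then
     \sum_(0 <= k < (`|M|%N).+1)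
        ((-1) ^+ k * ('C(n.+1, k))%:R
         * (binz (n%:Z + (b%:Z) * (j + 1 - k%:Z) - d * (n%:Z - 1) - i - 1) n)%:R)
   else 0).

From HB Require Import structures.
From mathcomp Require Import all_boot all_order all_algebra.
From mathcomp Require Import zify ring.
Set Implicit Arguments. Unset Strict Implicit. Unset Printing Implicit Defensive.
Import Order.TTheory GRing.Theory Num.Theory.
Local Open Scope ring_scope.

(* Write a digit of D as d + x with x uniform in [0, b), and |x| = x_1 + ... + x_n.
   1. One step of the process is C' = floor((C + nd - d + |x|) / b), and the last
      round is independent of the earlier ones; hence p_{i,j} is the number of
      x in [0,b)^n with floor((a + |x|) / b) = j, divided by b^n, where
      a = d(n-1) + i  (trans_prob_last_round).
   2. That floor condition is the difference of the two threshold conditions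
      |x| <= bj + b - 1 - a and |x| <= bj - 1 - a  (floor_div_eq_indicator).
   3. By inclusion-exclusion, the number L_n(m) of x in [0,b)^n with |x| <= m is
      sum_k (-1)^k C(n,k) C(m - kb + n, n): both sides satisfy
      L_{n+1}(m) = sum_{u<b} L_n(m - u), the right side by the hockey-stick
      identity and Pascal's rule  (box_countE).
   4. The two counts differ by a shift of b in m, so Pascal's rule merges them
      into the single alternating sum with C(n+1,k)  (last_round_count); the
      terms beyond the upper limit of the stated sum vanish (formula_term_eq0). *)

Lemma binz_pascal (N : int) (m : nat) :
  binz (N + 1) m.+1 = (binz N m.+1 + binz N m)%N.
Proof.
rewrite /binz; case: (ltrP N (-1)) => [Nlt|Nge].
  by rewrite !ifF //; apply/negbTE; rewrite -ltNge; lia.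
case: (ltrP N 0) => [Nneg|N0]; first by have -> : N = -1 by lia.
rewrite !ifT //; last lia.
have -> : absz (N + 1) = (absz N).+1 by lia.
by rewrite binS addnC.
Qed.

Lemma binz_small (N : int) (m : nat) : N < m%:Z -> binz N m = 0%N.
Proof. by rewrite /binz => NltM; case: ifP => // N0; apply: bin_small; lia. Qed.

Lemma binz_hockey (N : int) (m c : nat) :
  \sum_(0 <= u < c) (binz (N - u%:Z) m)%:Z =
  (binz (N + 1) m.+1)%:Z - (binz (N + 1 - c%:Z) m.+1)%:Z.
Proof.
elim: c => [|c IHc]; first by rewrite big_nil subr0 subrr.
rewrite big_nat_recr //= IHc.
have := binz_pascal (N - c%:Z) m.
have -> : N - c%:Z + 1 = N + 1 - c%:Z by ring.
have -> : N + 1 - (c.+1)%:Z = N - c%:Z by lia.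
by move->; rewrite PoszD; ring.
Qed.

Lemma alt_binomial_pascal (n : nat) (H : nat -> int) :
  \sum_(0 <= k < n.+1) (-1) ^+ k * ('C(n, k))%:Z * H k
  - \sum_(0 <= k < n.+1) (-1) ^+ k * ('C(n, k))%:Z * H k.+1
  = \sum_(0 <= k < n.+2) (-1) ^+ k * ('C(n.+1, k))%:Z * H k.
Proof.
rewrite [in RHS]big_nat_recl //.
have -> : \sum_(0 <= k < n.+1) (-1) ^+ k.+1 * ('C(n.+1, k.+1))%:Z * H k.+1
    = \sum_(0 <= k < n.+1) (-1) ^+ k.+1 * ('C(n, k.+1))%:Z * H k.+1
    - \sum_(0 <= k < n.+1) (-1) ^+ k * ('C(n, k))%:Z * H k.+1.
  by rewrite -sumrB; apply: eq_bigr => k _; rewrite binS PoszD exprS; ring.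
rewrite [X in _ = _ + (X - _)]big_nat_recr //= (bin_small (ltnSn n)).
by rewrite [in LHS]big_nat_recl // !bin0; ring.
Qed.

Definition ffun_snoc (T : Type) (t : nat) (f : {ffun 'I_t -> T}) (x : T) :
    {ffun 'I_t.+1 -> T} :=
  [ffun i => if unlift ord_max i is Some i' then f i' else x].

Lemma ffun_snoc_lift (T : Type) t (f : {ffun 'I_t -> T}) x i :
  ffun_snoc f x (lift ord_max i) = f i.
Proof. by rewrite ffunE liftK. Qed.

Lemma ffun_snoc_last (T : Type) t (f : {ffun 'I_t -> T}) x :
  ffun_snoc f x ord_max = x.
Proof. by rewrite ffunE unlift_none. Qed.

Lemma big_ffun_snoc (R : Type) (idx : R) (op : Monoid.com_law idx) (T : finType)
    (t : nat) (F : {ffun 'I_t.+1 -> T} -> R) :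
  \big[op/idx]_(w : {ffun 'I_t.+1 -> T}) F w =
  \big[op/idx]_(f : {ffun 'I_t -> T}) \big[op/idx]_(x : T) F (ffun_snoc f x).
Proof.
rewrite pair_big (reindex (fun p : {ffun 'I_t -> T} * T => ffun_snoc p.1 p.2)) //=.
apply: onW_bij.
exists (fun w : {ffun 'I_t.+1 -> T} => ([ffun i => w (lift ord_max i)], w ord_max)).
  case=> f x /=; rewrite ffun_snoc_last; congr pair.
  by apply/ffunP => i; rewrite ffunE ffun_snoc_lift.
move=> w; apply/ffunP => i; rewrite ffunE.
by case: unliftP => [j ->|->]; rewrite ?ffunE.
Qed.

Section BoxCount.
Variable b : nat.

Definition box_count (n : nat) (m : int) : int :=
  \sum_(x : {ffun 'I_n -> 'I_b}) (if \sum_k (x k : nat)%:Z <= m then 1 else 0).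

Definition box_formula (n : nat) (m : int) : int :=
  \sum_(0 <= k < n.+1) (-1) ^+ k * ('C(n, k))%:Z * (binz (m - k%:Z * b%:Z + n%:Z) n)%:Z.

Lemma box_formula_rec (n : nat) (m : int) :
  \sum_(0 <= u < b) box_formula n (m - u%:Z) = box_formula n.+1 m.
Proof.
rewrite /box_formula exchange_big /=.
pose H k := (binz (m - k%:Z * b%:Z + (n.+1)%:Z) n.+1)%:Z.
rewrite -(alt_binomial_pascal n H) -sumrB; apply: eq_bigr => k _.
rewrite -mulr_sumr -mulrBr; congr (_ * _).
rewrite (eq_bigr (fun u => (binz ((m - k%:Z * b%:Z + n%:Z) - u%:Z) n)%:Z)); last first.
  by move=> u _; congr (Posz (binz _ _)); ring.
by rewrite binz_hockey /H; congr (Posz (binz _ _) - Posz (binz _ _)); lia.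
Qed.

(* Fixing the last coordinate x_{n+1} = u reduces the threshold by u. *)
Lemma box_count_rec (n : nat) (m : int) :
  box_count n.+1 m = \sum_(0 <= u < b) box_count n (m - u%:Z).
Proof.
rewrite /box_count big_ffun_snoc exchange_big /= big_mkord.
apply: eq_bigr => u _; apply: eq_bigr => x _.
rewrite big_ord_recr /= ffun_snoc_last lerBrDr.
suff -> : \sum_(k < n) (ffun_snoc x u (widen_ord (leqnSn n) k) : nat)%:Z
        = \sum_(k < n) (x k : nat)%:Z by [].
apply: eq_bigr => k _; rewrite (_ : widen_ord _ k = lift ord_max k) ?ffun_snoc_lift //.
by apply: val_inj; rewrite /= /bump leqNgt ltn_ord.
Qed.

Lemma box_countE (n : nat) (m : int) : box_count n m = box_formula n m.
Proof.
elim: n m => [|n IHn] m; last first.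
  by rewrite box_count_rec -box_formula_rec; apply: eq_bigr => u _; apply: IHn.
rewrite /box_count /box_formula big_nat1 expr0 bin0 mul1r subr0 addr0 /binz.
under eq_bigr => x _ do rewrite big_ord0.
by rewrite sumr_const card_ffun !card_ord expn0 mulr1n; case: ifP; rewrite ?bin0.
Qed.

End BoxCount.

Lemma carry_stepE (b : nat) (d c s : int) : (0 < b)%N ->
  carry_step b d c s = ((c + s - d) %/ b%:Z)%Z.
Proof.
move=> b_gt0; rewrite /carry_step; set m := c + s - d.
have -> : c + s - (d + (m %% b%:Z)%Z) = m - (m %% b%:Z)%Z by rewrite /m; ring.
by rewrite {1}(divz_eq m b%:Z) addrK mulzK //; lia.
Qed.

Lemma digitX_lt (b n T : nat) (d : int) (w : {ffun 'I_T -> {ffun 'I_n -> 'I_b}})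
    (i : nat) (iT : (i < T)%N) (k : 'I_n) :
  digitX d w i k = d + (w (Ordinal iT) k : nat)%:Z.
Proof. by rewrite /digitX (@insubT _ (fun j => (j < T)%N) _ i iT). Qed.

Lemma digitX_snoc (b n t : nat) (d : int) (f : {ffun 'I_t -> {ffun 'I_n -> 'I_b}})
    (x : {ffun 'I_n -> 'I_b}) (i : nat) (it : (i < t)%N) (k : 'I_n) :
  digitX d (ffun_snoc f x) i k = digitX d f i k.
Proof.
rewrite (digitX_lt _ _ (leqW it)) (digitX_lt _ _ it).
suff -> : Ordinal (leqW it) = lift ord_max (Ordinal it) by rewrite ffun_snoc_lift.
by apply: val_inj; rewrite /= /bump leqNgt it.
Qed.

Lemma digitX_snoc_last (b n t : nat) (d : int) (f : {ffun 'I_t -> {ffun 'I_n -> 'I_b}})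
    (x : {ffun 'I_n -> 'I_b}) (k : 'I_n) :
  digitX d (ffun_snoc f x) t k = d + (x k : nat)%:Z.
Proof.
rewrite (digitX_lt _ _ (ltnSn t)).
by rewrite (_ : Ordinal _ = ord_max) ?ffun_snoc_last //; apply: val_inj.
Qed.

Lemma carry_at_snoc (b n t : nat) (d : int) (f : {ffun 'I_t -> {ffun 'I_n -> 'I_b}})
    (x : {ffun 'I_n -> 'I_b}) (s : nat) :
  (s <= t)%N -> carry_at d (ffun_snoc f x) s = carry_at d f s.
Proof.
elim: s => [|s IHs] st //=; rewrite IHs ?(ltnW st) //.
by congr carry_step; apply: eq_bigr => k _; apply: digitX_snoc.
Qed.

Lemma card_predE (T : finType) (P : pred T) : #|[pred x | P x]| = \sum_(x : T) (P x : nat).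
Proof.
rewrite -sum1_card big_mkcond /=; apply: eq_bigr => x _.
by rewrite unfold_in; case: (P x).
Qed.

(* Markov property: conditionally on C_t = i, C_{t+1} is computed from the
   independent, uniform last round alone. *)
Lemma trans_prob_last_round (b n t : nat) (d i j : int) (b_gt0 : (0 < b)%N)
    (reach : #|[pred f : {ffun 'I_t -> {ffun 'I_n -> 'I_b}} | carry_at d f t == i]| != 0%N) :
  trans_prob b n d t i j =
  (\sum_(x : {ffun 'I_n -> 'I_b})
      (carry_step b d i (\sum_(k < n) (d + (x k : nat)%:Z)) == j : nat))%:R
  / ((b ^ n)%N)%:R.
Proof.
move: reach; rewrite /trans_prob !card_predE !big_ffun_snoc.
set A := \sum_(f : {ffun 'I_t -> _}) _; set B := \sum_(x : {ffun 'I_n -> 'I_b}) _.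
move=> A_neq0.
have carry_t (f : {ffun 'I_t -> {ffun 'I_n -> 'I_b}}) x :
    carry_at d (ffun_snoc f x) t = carry_at d f t by exact: carry_at_snoc.
have joint : \sum_(f : {ffun 'I_t -> {ffun 'I_n -> 'I_b}}) \sum_(x : {ffun 'I_n -> 'I_b})
    (((carry_at d (ffun_snoc f x) t == i) && (carry_at d (ffun_snoc f x) t.+1 == j)) : nat)
    = (A * B)%N.
  rewrite /A big_distrl /=; apply: eq_bigr => f _; under eq_bigr => x _ do rewrite carry_t.
  case: eqP => [ci|_] /=; last by rewrite mul0n big1.
  rewrite mul1n; apply: eq_bigr => x _ /=; rewrite ci.
  congr (nat_of_bool (carry_step _ _ _ _ == _)).
  by apply: eq_bigr => k _; rewrite digitX_snoc_last.
have marginal : \sum_(f : {ffun 'I_t -> {ffun 'I_n -> 'I_b}}) \sum_(x : {ffun 'I_n -> 'I_b})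
    ((carry_at d (ffun_snoc f x) t == i) : nat) = (A * b ^ n)%N.
  rewrite /A big_distrl /=; apply: eq_bigr => f _; under eq_bigr => x _ do rewrite carry_t.
  by rewrite sum_nat_const card_ffun !card_ord mulnC.
rewrite joint marginal !natrM; field.
by rewrite !pnatr_eq0 A_neq0 -lt0n expn_gt0 b_gt0.
Qed.

Lemma floor_div_eq_indicator (b : nat) (a y j : int) : (0 < b)%N ->
  (((a + y) %/ b%:Z)%Z == j : nat)%:R =
  (if y <= b%:Z * j + b%:Z - 1 - a then 1 else 0)
  - (if y <= b%:Z * j - 1 - a then 1 else 0) :> int.
Proof.
move=> b_gt0; set q := ((a + y) %/ b%:Z)%Z.
have q_low : q * b%:Z <= a + y by apply: lez_floor; lia.
have q_up : a + y < (q + 1) * b%:Z by apply: ltz_ceil; lia.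
case: (ltgtP q j) => [qj|jq|qj].
- have : (q + 1) * b%:Z <= j * b%:Z by apply: ler_wpM2r; lia.
  by move=> ?; rewrite !ifT ?subrr //; lia.
- have : (j + 1) * b%:Z <= q * b%:Z by apply: ler_wpM2r; lia.
  by move=> ?; rewrite !ifF ?subrr //; apply/negbTE; rewrite -ltNge; lia.
- by rewrite ifT ?ifF ?subr0 //; [apply/negbTE; rewrite -ltNge|]; lia.
Qed.

Definition formula_term (b n : nat) (d i j : int) (k : nat) : int :=
  (-1) ^+ k * ('C(n.+1, k))%:Z *
  (binz (n%:Z + b%:Z * (j + 1 - k%:Z) - d * (n%:Z - 1) - i - 1) n)%:Z.

Lemma last_round_count (b n : nat) (d i j : int) (b_gt0 : (0 < b)%N) :
  ((\sum_(x : {ffun 'I_n -> 'I_b})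
      (carry_step b d i (\sum_(k < n) (d + (x k : nat)%:Z)) == j : nat))%:R : int)
  = \sum_(0 <= k < n.+2) formula_term b n d i j k.
Proof.
set a := d * (n%:Z - 1) + i.
have threshold (x : {ffun 'I_n -> 'I_b}) :
    (carry_step b d i (\sum_(k < n) (d + (x k : nat)%:Z)) == j : nat)%:R
    = (if \sum_k (x k : nat)%:Z <= b%:Z * j + b%:Z - 1 - a then 1 else 0)
      - (if \sum_k (x k : nat)%:Z <= b%:Z * j - 1 - a then 1 else 0) :> int.
  rewrite -floor_div_eq_indicator // carry_stepE // big_split /= sumr_const card_ord.
  set S := \sum_(k < n) _.
  by have -> : i + (d *+ n + S) - d = a + S by rewrite /a -[d *+ n]mulr_natr natz; ring.
rewrite natr_sum (eq_bigr _ (fun x _ => threshold x)) sumrB.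
rewrite -/(box_count b n _) -/(box_count b n _) !box_countE /box_formula.
pose H k := (binz (b%:Z * j + b%:Z - 1 - a - k%:Z * b%:Z + n%:Z) n)%:Z.
have shift_by_b : \sum_(0 <= k < n.+1) (-1) ^+ k * ('C(n, k))%:Z *
      (binz (b%:Z * j - 1 - a - k%:Z * b%:Z + n%:Z) n)%:Z
    = \sum_(0 <= k < n.+1) (-1) ^+ k * ('C(n, k))%:Z * H k.+1.
  by apply: eq_bigr => k _; rewrite /H; congr (_ * Posz (binz _ _)); lia.
rewrite shift_by_b alt_binomial_pascal; apply: eq_bigr => k _.
by rewrite /formula_term /H; congr (_ * Posz (binz _ _)); rewrite /a; ring.
Qed.

Lemma formula_term_eq0_binom (b n : nat) (d i j : int) (k : nat) :
  (n.+1 < k)%N -> formula_term b n d i j k = 0.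
Proof. by move=> nk; rewrite /formula_term bin_small // mulr0 mul0r. Qed.

Lemma formula_term_eq0 (b n : nat) (d i j : int) (k : nat) : (0 < b)%N ->
  j + 1 - k%:Z <= ((d * (n%:Z - 1) + i) %/ b%:Z)%Z -> formula_term b n d i j k = 0.
Proof.
move=> b_gt0; set a := d * (n%:Z - 1) + i => jk.
have a_low : (a %/ b%:Z)%Z * b%:Z <= a by apply: lez_floor; lia.
have : b%:Z * (j + 1 - k%:Z) <= b%:Z * (a %/ b%:Z)%Z by apply: ler_wpM2l; lia.
by move=> ?; rewrite /formula_term binz_small ?mulr0 //; rewrite /a in a_low *; lia.
Qed.

Lemma sum_nat_trunc (F : nat -> int) (K1 K2 : nat) :
  (forall k, (K1 <= k)%N -> F k = 0) -> (forall k, (K2 <= k)%N -> F k = 0) ->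
  \sum_(0 <= k < K1) F k = \sum_(0 <= k < K2) F k.
Proof.
wlog K12 : K1 K2 / (K1 <= K2)%N.
  move=> W F1 F2; case: (leqP K1 K2) => [K12|/ltnW K21]; first exact: W.
  by symmetry; apply: W.
move=> F1 _; rewrite (big_cat_nat (leq0n K1) K12) /= [X in _ = _ + X]big_nat_cond.
by rewrite [X in _ = _ + X]big1 ?addr0 // => k /andP[/andP[/F1]].
Qed.

Theorem theorem2 (b n : nat) (d : int)
  (hb : (2 <= b)%N) (hn : (1 <= n)%N)
  (hd0 : d <= 0) (hd1 : 0 <= d + (b%:Z) - 1)
  (i j : int) (hi : in_Omega b n d i) (hj : in_Omega b n d j)
  (t : nat) (ht : 0 < prob_C b n d t i) :
  trans_prob b n d t i j = trans_formula b n d i j.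
Proof.
have b_gt0 : (0 < b)%N by apply: leq_trans hb.
have reach : #|[pred f : {ffun 'I_t -> {ffun 'I_n -> 'I_b}} | carry_at d f t == i]| != 0%N.
  by move: ht; rewrite /prob_C; apply: contraTneq => ->; rewrite mul0r ltxx.
have int_cast (N : nat) : (N%:R : rat) = (N%:R : int)%:~R by rewrite natz.
rewrite trans_prob_last_round // int_cast last_round_count // /trans_formula /=.
set a := d * (n%:Z - 1) + i.
case: (lerP 0 (j - (a %/ b%:Z)%Z)) => M0; last first.
  rewrite big1_seq ?mulr0 ?mul0r // => k _.
  by apply: formula_term_eq0 => //; rewrite -/a; lia.
rewrite mulrC (@sum_nat_trunc _ n.+2 (`|j - (a %/ b%:Z)%Z|%N).+1); first last.
- by move=> k kM; apply: formula_term_eq0 => //; rewrite -/a; lia.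
- by move=> k nk; apply: formula_term_eq0_binom.
rewrite rmorph_sum; congr (_ * _); apply: eq_bigr => k _.
by rewrite /formula_term !rmorphM /= intr_sign.
Qed.
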